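(* Let $\mathcal F$ be a family of graphs, every member of which is connected, and let $v$ be the smallest number of vertices of a member of $\mathcal F$. Then for every positive integer $n$ and every nonnegative integer $k$, $$\left(1-\frac{2kv}{n}\right)\mathrm{ex}(n,\mathcal F)\le \mathrm{exa}_k(n,\mathcal F)\le \mathrm{ex}(n,\mathcal F)+k=\mathrm{exa}_0(n,\mathcal F)+k.$$
   Context: For graphs $H$ and $F$, $\mathcal N(H,F)$ is the number of subgraphs of $H$ isomorphic to $F$. For a family $\mathcal F$ of graphs and a nonnegative integer $k$, $\mathrm{exa}_k(n,\mathcal F)$ is the largest number of edges of a simple graph $H$ on $n$ vertices with $\sum_{F\in\mathcal F}\mathcal N(H,F)=k$ (defined whenever such an $H$ exists). $\mathrm{ex}(n,\mathcal F)=\mathrm{exa}_0(n,\mathcal F)$ is the largest number of edges of a graph on $n$ vertices containing no subgraph isomorphic to a member of $\mathcal F$. *)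

From mathcomp Require Import all_boot all_order all_algebra.
Set Implicit Arguments. Unset Strict Implicit. Unset Printing Implicit Defensive.

(* A (simple) graph on the vertex set 'I_m = {0,...,m-1}: its edge set,
   a set of 2-element subsets of 'I_m. *)
Definition graph (m : nat) := {set {set 'I_m}}.

Definition simple_graph m (G : graph m) : bool := [forall e in G, #|e| == 2].

Definition adj m (G : graph m) : rel 'I_m := fun x y => [set x; y] \in G.

Definition connected m (G : graph m) : bool :=
  (0 < m) && [forall x, forall y, connect (adj G) x y].

(* A subgraph of H: a pair (vertex set S, edge set E) with E a subset of the
   edges of H and every edge of E contained in S. *)
Definition is_subgraph n (H : graph n) (p : {set 'I_n} * graph n) : bool :=
  (p.2 \subset H) && [forall e in p.2, e \subset p.1].

Definition iso_to n m (p : {set 'I_n} * graph n) (G : graph m) : bool :=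
  [exists f : {ffun 'I_m -> 'I_n},
     [&& injectiveb f, f @: setT == p.1 & p.2 == [set f @: e | e : {set 'I_m} in G]]].

Definition graph_family := forall m : nat, pred (graph m).

(* \sum_{F in Fam} N(H,F): the number of subgraphs of H isomorphic to a member
   of Fam.  A member on m vertices can only embed if m <= n, so it suffices
   to range over m < n.+1. *)
Definition count n (Fam : graph_family) (H : graph n) : nat :=
  #|[set p : {set 'I_n} * graph n | is_subgraph H p &&
       [exists m : 'I_n.+1, exists G : graph m, Fam m G && iso_to p G]]|.

Definition is_exa (n : nat) (Fam : graph_family) (k e : nat) : Prop :=
  (exists2 H : graph n, simple_graph H & count Fam H = k /\ #|H| = e) /\
  (forall H : graph n, simple_graph H -> count Fam H = k -> #|H| <= e).

Definition is_ex (n : nat) (Fam : graph_family) (e : nat) : Prop := is_exa n Fam 0 e.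

From Pilot Require Import Defs.
From mathcomp Require Import all_boot all_order all_algebra.
From mathcomp Require Import zify ring.
Import Order.TTheory GRing.Theory Num.Theory.
Set Implicit Arguments. Unset Strict Implicit. Unset Printing Implicit Defensive.

(* Upper bound: in a graph with k copies, delete one edge from each copy that
   has edges.  No copy survives (an edgeless copy would also be a copy in an
   F-free graph), so exa_k <= ex + k.

   Lower bound: if kv > n there is nothing to prove.  Otherwise take an
   extremal F-free graph H0, choose kv vertices of total degree at most
   (kv / n) 2 ex (they exist by averaging), delete all edges meeting them and
   plant on them k vertex-disjoint copies of a member F on v vertices with the
   fewest edges.  Members are connected, so a copy in the new graph either
   meets a planted block, and then lies inside it and (by minimality of v and
   of |E(F)|) is that block, or avoids all blocks and is a copy in H0.  Hence
   the new graph has exactly k copies and at least (1 - 2kv/n) ex edges. *)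

Lemma leq_card_bigcup (I T : finType) (A : {pred I}) (F : I -> {set T}) :
  #|\bigcup_(i in A) F i| <= \sum_(i in A) #|F i|.
Proof.
elim/big_rec2: _ => [|i s U _ le_Us]; first by rewrite cards0.
by apply: leq_trans (leq_card_setU _ _) _; rewrite leq_add2l.
Qed.

Lemma exists_small_transversal (I T : finType) (C : {set I}) (F : I -> {set T}) :
  exists2 D : {set T}, #|D| <= #|C| &
    {in C, forall i, F i != set0 -> F i :&: D != set0}.
Proof.
pose pt i := if [pick x in F i] is Some x then [set x] else set0.
exists (\bigcup_(i in C) pt i).
  apply: leq_trans (leq_card_bigcup _ _) _; rewrite -sum1_card leq_sum // => i _.
  by rewrite /pt; case: pickP => [x _|_]; rewrite ?cards1 ?cards0.
move=> i Ci /set0Pn[y Fiy]; have := bigcup_sup i Ci (F := pt).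
rewrite /pt; case: pickP => [x Fix /subsetP/(_ x (set11 x)) Dx|/(_ y)];
  last by rewrite Fiy.
by apply/set0Pn; exists x; rewrite inE Fix.
Qed.

Lemma sum_card_incident (T : finType) (E : {set {set T}}) :
  \sum_x #|[set e in E | x \in e]| = \sum_(e in E) #|e|.
Proof.
transitivity (\sum_x \sum_(e in E) (x \in e : nat)).
  apply: eq_bigr => x _; rewrite -sum1_card big_mkcond [RHS]big_mkcond /=.
  by apply: eq_bigr => e _; rewrite inE; case: (e \in E); case: (x \in e).
rewrite exchange_big; apply: eq_bigr => e _.
by rewrite -sum1_card [RHS]big_mkcond.
Qed.

Lemma leq_sum_setD1_max (T : finType) (d : T -> nat) (A : {set T}) x :
  x \in A -> {in A, forall y, d y <= d x} ->
  #|A| * \sum_(y in A :\ x) d y <= #|A :\ x| * \sum_(y in A) d y.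
Proof.
move=> Ax max_x; rewrite (cardsD1 x A) (big_setD1 x Ax) Ax /=.
have : \sum_(y in A :\ x) d y <= #|A :\ x| * d x.
  by rewrite -sum_nat_const leq_sum // => y /setD1P[_ /max_x].
nia.
Qed.

Lemma exists_light_subset (T : finType) (d : T -> nat) (A : {set T}) s :
  s <= #|A| -> exists2 S : {set T}, S \subset A &
    #|S| = s /\ #|A| * \sum_(x in S) d x <= s * \sum_(x in A) d x.
Proof.
have [-> _ | s_gt0] := posnP s.
  by exists set0; rewrite ?sub0set // cards0 big_set0 muln0.
have [a ltAa] := ubnP #|A|; elim: a A ltAa => // a IH A ltAa le_sA.
have [eq_sA | lt_sA] := eqVneq s #|A|.
  by exists A => //; rewrite eq_sA.
have /card_gt0P[x0 Ax0] : 0 < #|A| by apply: leq_trans s_gt0 le_sA.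
case: (arg_maxnP d Ax0) => x Ax max_x; have {}Ax : x \in A := Ax.
have cardAx : #|A| = #|A :\ x|.+1 by rewrite (cardsD1 x A) Ax.
have le_sAx : s <= #|A :\ x| by rewrite -ltnS -cardAx ltn_neqAle lt_sA.
have ltAxa : #|A :\ x| < a by rewrite -ltnS -cardAx.
have [S sSAx [cardS lightS]] := IH (A :\ x) ltAxa le_sAx.
exists S; first exact: subset_trans sSAx (subsetDl _ _).
split=> //; have := leq_sum_setD1_max Ax max_x.
rewrite -(leq_pmul2l (leq_trans s_gt0 le_sAx)) => ?; nia.
Qed.

Lemma exists_inj_onto (X T : finType) (S : {set T}) : #|X| = #|S| ->
  exists2 g : X -> T, injective g & g @: setT = S.
Proof.
move=> cardXS; pose g x := enum_val (A := mem S) (cast_ord cardXS (enum_rank x)).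
have g_inj : injective g by move=> x y /enum_val_inj/cast_ord_inj/enum_rank_inj.
exists g => //; apply/eqP; rewrite eqEcard card_imset // cardsT cardXS leqnn andbT.
by apply/subsetP => _ /imsetP[x _ ->]; apply: enum_valP.
Qed.

Section NatRatio.
Local Open Scope ring_scope.

Lemma ler_1Bdiv_nat (R : numFieldType) (n c a b : nat) : (0 < n)%N ->
  (n * a <= n * b + c * a)%N -> (1 - c%:R / n%:R) * a%:R <= b%:R :> R.
Proof.
move=> n_gt0 le_ab; have n_pos : 0 < n%:R :> R by rewrite ltr0n.
rewrite -(ler_pM2r n_pos).
have -> : (1 - c%:R / n%:R) * a%:R * n%:R = (n * a)%:R - (c * a)%:R :> R.
  by rewrite !natrM; field; rewrite lt0r_neq0.
by rewrite lerBlDr -natrM -natrD ler_nat [(b * n)%N]mulnC.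
Qed.

End NatRatio.

Lemma card_simple_edge m (H : graph m) e : simple_graph H -> e \in H -> #|e| = 2.
Proof. by move/forallP/(_ e)/implyP => sHe /sHe/eqP. Qed.

Lemma simple_graphS m (H1 H2 : graph m) :
  H1 \subset H2 -> simple_graph H2 -> simple_graph H1.
Proof.
move=> sH12 sH2; apply/forallP => e; apply/implyP => /(subsetP sH12) H2e.
by rewrite (card_simple_edge sH2 H2e).
Qed.

Definition degree m (H : graph m) x := #|[set e in H | x \in e]|.

Lemma sum_degrees m (H : graph m) : simple_graph H -> \sum_x degree H x = 2 * #|H|.
Proof.
move=> sH; rewrite sum_card_incident (eq_bigr (fun=> 2)) => [|e];
  last exact: card_simple_edge.
by rewrite sum_nat_const mulnC.
Qed.

Definition copies n (Fam : graph_family) (H : graph n) :=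
  [set p : {set 'I_n} * graph n | is_subgraph H p &&
       [exists m : 'I_n.+1, exists G : graph m, Fam m G && iso_to p G]].

(* Plain [count] would resolve to [seq.count]. *)
Lemma countE n Fam (H : graph n) : Defs.count Fam H = #|copies Fam H|.
Proof. by []. Qed.

Lemma copies_eq0 n Fam (H : graph n) : Defs.count Fam H = 0 -> copies Fam H = set0.
Proof. by rewrite countE => /eqP; rewrite cards_eq0 => /eqP. Qed.

Lemma copy_edges_sub n Fam (H : graph n) p : p \in copies Fam H -> p.2 \subset H.
Proof. by rewrite inE => /andP[/andP[]]. Qed.

Lemma copies_transfer n Fam (H1 H2 : graph n) p :
  p \in copies Fam H1 -> p.2 \subset H2 -> p \in copies Fam H2.
Proof. by rewrite !inE /is_subgraph => /andP[/andP[_ ->] ->] ->. Qed.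

Lemma exa_le_ex_addn n Fam k e0 e : is_ex n Fam e0 -> is_exa n Fam k e -> e <= e0 + k.
Proof.
case=> [[H0 _ [/copies_eq0 H0_free _]] max_e0] [[H sH [cntH <-]] _].
have [D cardD hitD] := exists_small_transversal (copies Fam H) (fun p => p.2).
have H'_free : Defs.count Fam (H :\: D) = 0.
  apply/eqP; rewrite countE cards_eq0; apply/eqP/setP => p; rewrite in_set0.
  apply/negbTE/negP => pH'; have sp := copy_edges_sub pH'.
  have pH : p \in copies Fam H := copies_transfer pH' (subset_trans sp (subsetDl _ _)).
  have [p2_0 | /(hitD p pH)/set0Pn[x /setIP[px Dx]]] := eqVneq p.2 set0.
    have : p \in copies Fam H0 by apply: copies_transfer pH _; rewrite p2_0 sub0set.
    by rewrite H0_free inE.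
  by have := subsetP sp x px; rewrite inE Dx.
have := max_e0 _ (simple_graphS (subsetDl H D) sH) H'_free.
have := subset_leq_card (subsetIr H D); rewrite -(cardsID D H) -cntH countE; lia.
Qed.

Section Planting.

Variables (n k v : nat) (g : 'I_k * 'I_v -> 'I_n).
Hypothesis g_inj : injective g.

Definition block_map i : {ffun 'I_v -> 'I_n} := [ffun a => g (i, a)].
Definition block i : {set 'I_n} := block_map i @: setT.
Definition block_edges (F : graph v) i : graph n :=
  [set block_map i @: e | e : {set 'I_v} in F].
Definition plant (H0 : graph n) (F : graph v) : graph n :=
  [set e in H0 | [disjoint e & g @: setT]] :|: \bigcup_i block_edges F i.

Lemma block_map_inj i : injective (block_map i).
Proof. by move=> a b; rewrite !ffunE => /g_inj[]. Qed.

Lemma card_block i : #|block i| = v.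
Proof. by rewrite card_imset ?cardsT ?card_ord //; apply: block_map_inj. Qed.

Lemma block_sub i : block i \subset g @: setT.
Proof. by apply/subsetP => _ /imsetP[a _ ->]; rewrite ffunE imset_f. Qed.

Lemma blocks_cover x : x \in g @: setT -> exists i, x \in block i.
Proof.
by case/imsetP => -[i a] _ ->; exists i; apply/imsetP; exists a; rewrite ?ffunE.
Qed.

Lemma blocks_disjoint i j x : x \in block i -> x \in block j -> i = j.
Proof. by move=> /imsetP[a _ ->] /imsetP[b _]; rewrite !ffunE => /g_inj[]. Qed.

Variable F : graph v.

Lemma card_block_edges i : #|block_edges F i| = #|F|.
Proof. by rewrite card_imset //; apply/imset_inj/block_map_inj. Qed.

Lemma block_edges_sub i e : e \in block_edges F i -> e \subset block i.
Proof. by case/imsetP => e' _ ->; apply/imsetS/subsetT. Qed.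

Variable H0 : graph n.

Lemma plant_edge_block i e x :
  e \in plant H0 F -> x \in e -> x \in block i -> e \in block_edges F i.
Proof.
move=> + ex xi; rewrite inE => /orP[|/bigcupP[j _ e_j]].
  by rewrite inE => /andP[_ /disjointFr/(_ ex)]; rewrite (subsetP (block_sub i)).
by rewrite (blocks_disjoint xi (subsetP (block_edges_sub e_j) x ex)).
Qed.

Lemma simple_plant : simple_graph H0 -> simple_graph F -> simple_graph (plant H0 F).
Proof.
move=> sH0 sF; apply/forallP => e; apply/implyP.
rewrite inE => /orP[|/bigcupP[j _ /imsetP[e' Fe' ->]]].
  by rewrite inE => /andP[/(card_simple_edge sH0) ->].
by rewrite card_imset ?(card_simple_edge sF Fe') //; apply: block_map_inj.
Qed.

Lemma leq_card_plant :
  #|H0| <= #|plant H0 F| + \sum_(x in g @: setT) degree H0 x.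
Proof.
set S := g @: setT.
rewrite -(cardsID [set e : {set 'I_n} | [disjoint e & S]] H0) leq_add //.
  by apply/subset_leq_card/subsetP => e; rewrite !inE => /andP[-> ->].
apply: leq_trans (leq_card_bigcup _ _); apply/subset_leq_card/subsetP => e.
rewrite !inE -setI_eq0 => /andP[/set0Pn[x /setIP[ex Sx]] H0e].
by apply/bigcupP; exists x; rewrite // inE H0e.
Qed.

Lemma connected_copy_in_block m (G : graph m) (f : 'I_m -> 'I_n) i (a b : 'I_m) :
  connected G -> {in G, forall e : {set 'I_m}, f @: e \in plant H0 F} ->
  f a \in block i -> f b \in block i.
Proof.
case/andP=> _ /forallP/(_ a)/forallP/(_ b) conn_ab GH.
have step x y : adj G x y -> f x \in block i -> f y \in block i.
  move=> /GH Exy fx; apply: subsetP (block_edges_sub (plant_edge_block Exy _ fx)) _ _.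
    by rewrite imset_f ?set21.
  by rewrite imset_f ?set22.
have cl : closed (adj G) [pred x | f x \in block i].
  by move=> x y xy; apply/idP/idP; apply: step; rewrite // /adj setUC.
by have := closed_connect cl conn_ab; rewrite !inE => <-.
Qed.

Variable Fam : graph_family.
Arguments Fam : clear implicits.
Hypothesis Fam_conn : forall m (G : graph m), Fam m G -> simple_graph G && connected G.
Hypothesis Fam_min : forall m (G : graph m), Fam m G -> v <= m.
Hypothesis FamF : Fam v F.
Hypothesis F_min : forall G : graph v, Fam v G -> #|F| <= #|G|.
Hypothesis H0_free : copies Fam H0 = set0.

Lemma block_copy i : (block i, block_edges F i) \in copies Fam (plant H0 F).
Proof.
have v_lt : v < n.+1 by have := max_card (block i); rewrite card_block card_ord.
rewrite inE; apply/andP; split; first (apply/andP; split).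
- by apply/subsetP => e e_i; rewrite inE; apply/orP; right; apply/bigcupP; exists i.
- by apply/forallP => e; apply/implyP; apply: block_edges_sub.
apply/existsP; exists (Ordinal v_lt); apply/existsP; exists F; rewrite FamF /=.
apply/existsP; exists (block_map i); rewrite !eqxx !andbT.
by apply/injectiveP; apply: block_map_inj.
Qed.

Lemma copy_meeting_block i P E x : (P, E) \in copies Fam (plant H0 F) ->
  x \in P -> x \in block i -> (P, E) = (block i, block_edges F i).
Proof.
rewrite inE => /andP[/andP[/= sEH _] /existsP[m /existsP[G /andP[FamG iso]]]].
case/existsP: iso => f /and3P[/injectiveP f_inj /eqP/= defP /eqP/= defE].
have /andP[sG connG] := Fam_conn FamG.
have GH : {in G, forall e : {set 'I_m}, f @: e \in plant H0 F}.
  by move=> e Ge; apply: (subsetP sEH); rewrite defE imset_f.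
rewrite -defP => /imsetP[a _ ->] fai.
have in_i b : f b \in block i := connected_copy_in_block b connG GH fai.
have sPi : f @: setT \subset block i by apply/subsetP => _ /imsetP[b _ ->].
have cardP : #|f @: setT| = m by rewrite card_imset // cardsT card_ord.
have eq_mv : m = v :> nat.
  apply/eqP; rewrite eqn_leq (Fam_min FamG) andbT.
  by rewrite -cardP -(card_block i) subset_leq_card.
have sEi : E \subset block_edges F i.
  apply/subsetP => e'; rewrite defE => /imsetP[e Ge ->].
  have /card_gt0P[c ec] : 0 < #|e| by rewrite (card_simple_edge sG Ge).
  exact: plant_edge_block (GH _ Ge) (imset_f f ec) (in_i c).
have cardE : #|E| = #|G| by rewrite defE card_imset //; apply: imset_inj.
have F_min_m : forall G' : graph m, Fam m G' -> #|F| <= #|G'| by rewrite eq_mv.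
congr pair; apply/eqP.
  by rewrite eqEcard sPi cardP card_block eq_mv leqnn.
by rewrite eqEcard sEi card_block_edges cardE F_min_m.
Qed.

Lemma copy_avoiding_blocks P E : (P, E) \in copies Fam (plant H0 F) ->
  [disjoint P & g @: setT] -> E \subset H0.
Proof.
rewrite inE => /andP[/andP[/= sEH /forallP sEP] _] disjP.
have /andP[sF _] := Fam_conn FamF.
apply/subsetP => e Ee; move: (subsetP sEH e Ee).
rewrite inE => /orP[|/bigcupP[j _ e_j]].
  by rewrite inE => /andP[].
case/imsetP: e_j (implyP (sEP e) Ee) => e' Fe' -> sP.
have /card_gt0P[c e'c] : 0 < #|e'| by rewrite (card_simple_edge sF Fe').
have Pc : block_map j c \in P by apply: (subsetP sP); rewrite imset_f.
by move: (disjointFr disjP Pc); rewrite ffunE imset_f.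
Qed.

Lemma copies_plant :
  copies Fam (plant H0 F) = [set (block i, block_edges F i) | i : 'I_k].
Proof.
apply/setP => -[P E]; apply/idP/imsetP => [copyPE | [i _ ->]]; last exact: block_copy.
have [disjP | ] := boolP [disjoint P & g @: setT].
  have := copies_transfer copyPE (copy_avoiding_blocks copyPE disjP).
  by rewrite H0_free inE.
rewrite -setI_eq0 => /set0Pn[x /setIP[Px /blocks_cover[i xi]]].
by exists i; rewrite // (copy_meeting_block copyPE Px xi).
Qed.

Lemma count_plant : Defs.count Fam (plant H0 F) = k.
Proof.
rewrite countE copies_plant card_imset ?cardsT ?card_ord // => i j [eq_ij _].
have /card_gt0P[x xi] : 0 < #|block i|.
  by rewrite card_block; case/andP: (Fam_conn FamF) => _ /andP[].
by apply: (blocks_disjoint xi); rewrite -eq_ij.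
Qed.

End Planting.

Lemma leq_mul_ex_exa n (Fam : graph_family) v k e0 e
  (Fam_conn : forall m (G : graph m), Fam m G -> simple_graph G && connected G)
  (Fam_ex : exists G : graph v, Fam v G)
  (Fam_min : forall m (G : graph m), Fam m G -> v <= m) :
  is_ex n Fam e0 -> is_exa n Fam k e -> n * e0 <= n * e + 2 * k * v * e0.
Proof.
case=> [[H0 sH0 [/copies_eq0 H0_free <-]] _] [_ max_e].
have [lt_nkv | le_kvn] := ltnP n (k * v); first by nia.
have [F FamF F_min] : exists2 F : graph v, Fam v F & forall G, Fam v G -> #|F| <= #|G|.
  case: Fam_ex => G0 FamG0.
  by case: (arg_minnP (fun G : graph v => #|G|) FamG0) => F; exists F.
have /andP[sF _] := Fam_conn _ _ FamF.
have le_kv_n : k * v <= #|[set: 'I_n]| by rewrite cardsT card_ord.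
have [S _ [cardS]] := exists_light_subset (degree H0) le_kv_n.
rewrite cardsT card_ord (eq_bigl _ _ (@in_setT 'I_n)).
rewrite sum_degrees // => lightS.
have card_blocks : #|{: 'I_k * 'I_v}| = #|S| by rewrite card_prod !card_ord cardS.
have [g g_inj def_S] := exists_inj_onto card_blocks.
have count_k := count_plant g_inj Fam_conn Fam_min FamF F_min H0_free.
have le_plant_e := max_e _ (simple_plant g_inj sH0 sF) count_k.
have := leq_card_plant g F H0; rewrite def_S => le_H0.
have : n * #|H0| <= n * (e + \sum_(x in S) degree H0 x).
  by rewrite leq_mul2l (leq_trans le_H0) ?leq_add2r ?orbT.
lia.
Qed.

Theorem proposition2p1 (Fam : graph_family) (v : nat)
  (Hmem : forall m (G : graph m), Fam m G -> simple_graph G && connected G)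
  (Hv_ex : exists G : graph v, Fam v G)
  (Hv_min : forall m (G : graph m), Fam m G -> v <= m)
  (n k e0 e : nat) (Hn : 0 < n)
  (Hex : is_ex n Fam e0) (Hexa : is_exa n Fam k e) :
  ((1 - (2 * k * v)%:R / n%:R) * e0%:R <= e%:R :> rat)%R /\ e <= e0 + k.
Proof.
split; last exact: exa_le_ex_addn Hex Hexa.
apply: ler_1Bdiv_nat Hn _.
exact: leq_mul_ex_exa Hmem Hv_ex Hv_min Hex Hexa.
Qed.
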